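(* Let $\mathcal{C}$ be an essentially small symmetric monoidal category with images, which is concrete with concrete images. Suppose $F\in\mathsf{Pmod}(\mathcal{C})$ is $S=\{s_1<\cdots<s_n\}$-constructible and let $\rho=\frac14\min_{1<i\le n}(s_i-s_{i-1})$. Then for any $G\in\mathsf{Pmod}(\mathcal{C})$ with $\varepsilon=d_I(F,G)<\rho$, there is a morphism $\nabla^\varepsilon(F_A)\to G_A$ in $\mathsf{PDgm}(A(\mathcal{C}))$.
   Context: $(\mathcal{C},\Box)$ is an essentially small symmetric monoidal category with unit object $e$. ''With images'': every morphism $f:a\to b$ factors as $f=h\circ g$ with $h:z\to b$ a monomorphism, universally among such factorizations; $\operatorname{im} f$ denotes $z$. ''Concrete with concrete images'': $\mathcal{C}$ embeds into $\mathsf{Set}$ and the image of a morphism corresponds to the set-theoretic image. A persistence module is a functor $F:(\mathbb{R},\le)\to\mathcal{C}$. For finite $S=\{s_1<\dots<s_n\}$, $F$ is $S$-constructible if $F(p\le q)$ is the identity on $e$ for $p\le q<s_1$, an isomorphism for $s_i\le p\le q<s_{i+1}$, and an isomorphism for $s_n\le p\le q$. $\mathsf{Pmod}(\mathcal{C})$ is the category of constructible persistence modules (constructible w.r.t. some finite $S$) and natural transformations. Interleaving distance: for $\varepsilon\in\mathbb{R}$, $\Delta^\varepsilon(F)=F\circ\mathsf{Shift}^\varepsilon$ where $\mathsf{Shift}^\varepsilon(r)=r+\varepsilon$; for $\varepsilon\ge0$, $\sigma^\varepsilon_F:F\to\Delta^\varepsilon F$ has components $F(r\le r+\varepsilon)$.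 $F,G$ are $\varepsilon$-interleaved if there are morphisms $\phi:F\to\Delta^\varepsilon G$, $\psi:G\to\Delta^\varepsilon F$ with $\Delta^\varepsilon(\psi)\circ\phi=\sigma^{2\varepsilon}_F$ and $\Delta^\varepsilon(\phi)\circ\psi=\sigma^{2\varepsilon}_G$. $d_I(F,G)$ is the minimum $\varepsilon\ge0$ for which they are $\varepsilon$-interleaved ($\infty$ if none). $\mathsf{Dgm}$ is the poset of intervals $[q,r)$, $q<r$, and $[q,\infty)$, ordered by containment. $I(\mathcal{C})$ is the commutative monoid of isomorphism classes under $[a]+[b]=[a\Box b]$, $A(\mathcal{C})$ its group completion, with partial order $x\preceq y$ iff $y-x\in I(\mathcal{C})$ (translation invariant). A persistence diagram valued in $A(\mathcal{C})$ is a map $Y:\mathsf{Dgm}\to A(\mathcal{C})$ that is nonzero only on intervals $[t_i,t_j)$, $[t_i,\infty)$ for some finite set $\{t_1<\dots<t_m\}$. $\mathsf{PDgm}(A(\mathcal{C}))$ is the poset of such diagrams where there is a morphism $Y_1\to Y_2$ iff $\sum_{J\supseteq I}Y_1(J)\preceq\sum_{J\supseteq I}Y_2(J)$ for every $I\in\mathsf{Dgm}$ with $Y_1(I)\neq 0$. For $\varepsilon\ge0$, $\mathsf{Grow}^\varepsilon$ sends $[p,q)\mapsto[p-\varepsilon,q+\varepsilon)$, $[p,\infty)\mapsto[p-\varepsilon,\infty)$, and $\nabla^\varepsilon(Y)=Y\circ\mathsf{Grow}^\varepsilon$. Type $A$ diagram: for $F$ $S$-constructible, define $dF_A:\mathsf{Dgm}\to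 A(\mathcal{C})$ by $dF_A([p,s_i))=[\operatorname{im}F(p\le s_i-\delta)]$ for any $\delta>0$ with $\max(p,s_{i-1})\le s_i-\delta$ ($s_0=-\infty$); $dF_A([p,\infty))=[\operatorname{im}F(p\le s')]$ for any $s'>\max(p,s_n)$; $dF_A([p,q))=[\operatorname{im}F(p\le q)]$ for all other intervals (independent of choices). $F_A$ is its Möbius inversion: $F_A([s_i,s_j))=dF_A([s_i,s_j))-dF_A([s_i,s_{j+1}))+dF_A([s_{i-1},s_{j+1}))-dF_A([s_{i-1},s_j))$, $F_A([s_i,\infty))=dF_A([s_i,\infty))-dF_A([s_{i-1},\infty))$ ($s_0$ any value $<s_1$, $s_{n+1}$ any value $>s_n$), and $F_A(I)=0$ otherwise; it satisfies $dF_A(I)=\sum_{J\supseteq I}F_A(J)$. *)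

From HB Require Import structures.
From mathcomp Require Import all_boot all_order all_algebra.
From mathcomp Require Import reals.
Set Implicit Arguments.
Unset Strict Implicit.
Unset Printing Implicit Defensive.
Import Order.TTheory GRing.Theory Num.Theory.
Local Open Scope ring_scope.

(* "Essentially small": objects form a type Obj living in a universe. *)
Record category := Cat {
  Obj : Type;
  Hom : Obj -> Obj -> Type;
  idm : forall a, Hom a a;
  cmp : forall a b c, Hom b c -> Hom a b -> Hom a c;
  comp_id_l : forall a b (f : Hom a b), cmp (idm b) f = f;
  comp_id_r : forall a b (f : Hom a b), cmp f (idm a) = f;
  comp_assoc : forall a b c d (f : Hom a b) (g : Hom b c) (h : Hom c d),
      cmp h (cmp g f) = cmp (cmp h g) f }.
Arguments Hom {_}.
Arguments idm {_}.
Arguments cmp {_ _ _ _}.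

Definition mono (C : category) (a b : Obj C) (f : Hom a b) : Prop :=
  forall z (g1 g2 : Hom z a), cmp f g1 = cmp f g2 -> g1 = g2.

Definition is_iso (C : category) (a b : Obj C) (f : Hom a b) : Prop :=
  exists g : Hom b a, cmp g f = idm a /\ cmp f g = idm b.

Definition iso (C : category) (a b : Obj C) : Prop := exists f : Hom a b, is_iso f.

(* f is the identity morphism of x (forces domain = codomain = x). *)
Inductive idOn (C : category) (x : Obj C) : forall a b : Obj C, Hom a b -> Prop :=
  idOn_intro : idOn x (idm x).

Record smon (C : category) := SMon {
  ten : Obj C -> Obj C -> Obj C;
  tenh : forall a b c d, Hom a b -> Hom c d -> Hom (ten a c) (ten b d);
  tenh_id : forall a c, tenh (idm a) (idm c) = idm (ten a c);
  tenh_comp : forall a1 b1 c1 a2 b2 c2 (f1 : Hom a1 b1) (g1 : Hom b1 c1)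
      (f2 : Hom a2 b2) (g2 : Hom b2 c2),
      tenh (cmp g1 f1) (cmp g2 f2) = cmp (tenh g1 g2) (tenh f1 f2);
  munit : Obj C;
  assoc : forall a b c, Hom (ten (ten a b) c) (ten a (ten b c));
  assoc_inv : forall a b c, Hom (ten a (ten b c)) (ten (ten a b) c);
  assoc_K : forall a b c, cmp (assoc_inv a b c) (assoc a b c) = idm _;
  assoc_Kv : forall a b c, cmp (assoc a b c) (assoc_inv a b c) = idm _;
  assoc_nat : forall a a' b b' c c' (f : Hom a a') (g : Hom b b') (h : Hom c c'),
      cmp (assoc a' b' c') (tenh (tenh f g) h) = cmp (tenh f (tenh g h)) (assoc a b c);
  lunit : forall a, Hom (ten munit a) a;
  lunit_inv : forall a, Hom a (ten munit a);
  lunit_K : forall a, cmp (lunit_inv a) (lunit a) = idm _;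
  lunit_Kv : forall a, cmp (lunit a) (lunit_inv a) = idm _;
  lunit_nat : forall a b (f : Hom a b), cmp (lunit b) (tenh (idm munit) f) = cmp f (lunit a);
  runit : forall a, Hom (ten a munit) a;
  runit_inv : forall a, Hom a (ten a munit);
  runit_K : forall a, cmp (runit_inv a) (runit a) = idm _;
  runit_Kv : forall a, cmp (runit a) (runit_inv a) = idm _;
  runit_nat : forall a b (f : Hom a b), cmp (runit b) (tenh f (idm munit)) = cmp f (runit a);
  braid : forall a b, Hom (ten a b) (ten b a);
  braid_nat : forall a a' b b' (f : Hom a a') (g : Hom b b'),
      cmp (braid a' b') (tenh f g) = cmp (tenh g f) (braid a b);
  braid_sym : forall a b, cmp (braid b a) (braid a b) = idm _;
  pentagon : forall a b c d,
      cmp (assoc a b (ten c d)) (assoc (ten a b) c d)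
      = cmp (tenh (idm a) (assoc b c d))
             (cmp (assoc a (ten b c) d) (tenh (assoc a b c) (idm d)));
  triangle : forall a b,
      cmp (tenh (idm a) (lunit b)) (assoc a munit b) = tenh (runit a) (idm b);
  hexagon : forall a b c,
      cmp (assoc b c a) (cmp (braid a (ten b c)) (assoc a b c))
      = cmp (tenh (idm b) (braid a c)) (cmp (assoc b a c) (tenh (braid a b) (idm c)))
}.
Arguments ten {C}.
Arguments tenh {C} s {a b c d}.
Arguments munit {C}.

Record images (C : category) := Images {
  im : forall a b : Obj C, Hom a b -> Obj C;
  im_m : forall a b (f : Hom a b), Hom (im f) b;
  im_e : forall a b (f : Hom a b), Hom a (im f);
  im_mono : forall a b (f : Hom a b), mono (im_m f);
  im_fact : forall a b (f : Hom a b), cmp (im_m f) (im_e f) = f;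
  im_univ : forall a b (f : Hom a b) z (g : Hom a z) (h : Hom z b),
      mono h -> cmp h g = f -> exists k : Hom (im f) z, cmp h k = im_m f
}.
Arguments im {C} i {a b}.
Arguments im_m {C} i {a b}.

Record concrete (C : category) (I : images C) := Concrete {
  U : Obj C -> Type;
  Uh : forall a b : Obj C, Hom a b -> U a -> U b;
  Uh_id : forall a x, Uh (idm a) x = x;
  Uh_comp : forall a b c (f : Hom a b) (g : Hom b c) x, Uh (cmp g f) x = Uh g (Uh f x);
  Uh_faithful : forall a b (f g : Hom a b), (forall x, Uh f x = Uh g x) -> f = g;
  Uh_im_inj : forall a b (f : Hom a b), injective (Uh (im_m I f));
  Uh_im_range : forall a b (f : Hom a b) y,
      (exists z, Uh (im_m I f) z = y) <-> (exists x, Uh f x = y)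
}.

(* A(C): the group completion of the commutative monoid I(C) of iso    *)
(* classes under [a]+[b] = [a (x) b], given by its defining properties *)
(* (it is unique up to unique isomorphism).                           *)
Record groth (C : category) (M : smon C) := Groth {
  gA : zmodType;
  cls : Obj C -> gA;
  cls_ten : forall a b, cls (ten M a b) = cls a + cls b;
  cls_eq : forall a b, cls a = cls b <-> exists k, iso (ten M a k) (ten M b k);
  cls_gen : forall x : gA, exists a b, x = cls a - cls b
}.
Arguments cls {C M} g.

Definition ple (C : category) (M : smon C) (K : groth M) (x y : gA K) : Prop :=
  exists c, y - x = cls K c.

Record pmod (R : realType) (C : category) := PMod {
  Fo : R -> Obj C;
  Fm : forall p q : R, p <= q -> Hom (Fo p) (Fo q);
  Fm_id : forall p (h : p <= p), Fm h = idm (Fo p);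
  Fm_comp : forall p q r (h1 : p <= q) (h2 : q <= r) (h3 : p <= r),
      Fm h3 = cmp (Fm h2) (Fm h1)
}.
Arguments Fm {R C} _ {_ _}.

Definition constructible (R : realType) (C : category) (M : smon C) (F : pmod R C)
    (s : seq R) : Prop :=
  [/\ s != [::], sorted <%R s,
      forall p q (h : p <= q), q < head 0 s -> idOn (munit M) (Fm F h),
      forall (i : nat) p q (h : p <= q), (i.+1 < size s)%N ->
          s`_i <= p -> q < s`_i.+1 -> is_iso (Fm F h) &
      forall p q (h : p <= q), last 0 s <= p -> is_iso (Fm F h)].

(* Interleavings. Delta^eps G = G o Shift^eps; naturality is required  *)
(* for every proof of the order relations involved; sigma^{2 eps}_F at *)
(* r is F(r <= r + eps + eps).                                         *)
Definition interleaved (R : realType) (C : category) (F G : pmod R C) (eps : R) : Prop :=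
  exists (phi : forall r, Hom (Fo F r) (Fo G (r + eps)))
         (psi : forall r, Hom (Fo G r) (Fo F (r + eps))),
  [/\ forall p q (h : p <= q) (h' : p + eps <= q + eps),
        cmp (Fm G h') (phi p) = cmp (phi q) (Fm F h),
      forall p q (h : p <= q) (h' : p + eps <= q + eps),
        cmp (Fm F h') (psi p) = cmp (psi q) (Fm G h),
      forall r (h : r <= r + eps + eps), cmp (psi (r + eps)) (phi r) = Fm F h &
      forall r (h : r <= r + eps + eps), cmp (phi (r + eps)) (psi r) = Fm G h].

Definition dI_eq (R : realType) (C : category) (F G : pmod R C) (eps : R) : Prop :=
  [/\ 0 <= eps, interleaved F G eps &
      forall d, 0 <= d -> interleaved F G d -> eps <= d].

(* IFin q r = [q, r), IInf q = [q, oo).                                *)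
Inductive itv (R : Type) := IFin of R & R | IInf of R.
Arguments IFin {R}.
Arguments IInf {R}.

Section Diagrams.
Variable R : realType.

Definition valid (I : itv R) : bool :=
  match I with IFin q r => q < r | IInf _ => true end.

Definition contains (J I : itv R) : bool :=
  match J, I with
  | IFin q r, IFin q' r' => (q <= q') && (r' <= r)
  | IInf q, IFin q' _ => q <= q'
  | IInf q, IInf q' => q <= q'
  | IFin _ _, IInf _ => false
  end.

Definition endpoints_in (ts : seq R) (I : itv R) : bool :=
  match I with IFin q r => (q \in ts) && (r \in ts) | IInf q => q \in ts end.

Definition grow (eps : R) (I : itv R) : itv R :=
  match I with IFin p q => IFin (p - eps) (q + eps) | IInf p => IInf (p - eps) end.

Variable V : zmodType.

Definition supported (Y : itv R -> V) (ts : seq R) : Prop :=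
  forall I, Y I != 0 -> valid I && endpoints_in ts I.

Definition is_pdgm (Y : itv R -> V) : Prop := exists ts, supported Y ts.

Definition cands (ts : seq R) : seq (itv R) :=
  let u := undup ts in [seq IFin a b | a <- u, b <- u] ++ [seq IInf a | a <- u].

(* sum_{J \supseteq I} Y(J), computed over a finite support ts of Y *)
Definition upsum (Y : itv R -> V) (ts : seq R) (I : itv R) : V :=
  \sum_(J <- cands ts | contains J I) Y J.

Definition nabla (eps : R) (Y : itv R -> V) : itv R -> V :=
  fun I => if valid I then Y (grow eps I) else 0.

End Diagrams.

Definition pdgm_hom (R : realType) (C : category) (M : smon C) (K : groth M)
    (Y1 Y2 : itv R -> gA K) : Prop :=
  [/\ is_pdgm Y1, is_pdgm Y2 &
      forall ts, supported Y1 ts -> supported Y2 ts ->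
      forall I, valid I -> Y1 I != 0 -> ple (upsum Y1 ts I) (upsum Y2 ts I)].

Section TypeA.
Variables (R : realType) (C : category) (M : smon C) (K : groth M) (Im : images C)
          (F : pmod R C).

(* [im F(p <= q)] in A(C) (0 if p > q; never used in that case) *)
Definition clsim (p q : R) : gA K :=
  (if p <= q as b return (p <= q) = b -> gA K
   then fun h => cls K (im Im (Fm F h)) else fun _ => 0) (erefl (p <= q)).

Variable s : seq R.

(* s_k with paper indexing, k = 0..n+1; s_0 := s_1 - 1 < s_1,
   s_{n+1} := s_n + 1 > s_n. *)
Definition sp (k : nat) : R :=
  if k == 0%N then head 0 s - 1
  else if (k <= size s)%N then s`_k.-1 else last 0 s + 1.

(* dF_A.  For [p, s_i) we take s_i - delta := max(p, s_{i-1})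
   (:= p when i = 1); for [p, oo) we take s' := max(p, s_n) + 1. *)
Definition dFA (I : itv R) : gA K :=
  match I with
  | IFin p q =>
      if q \in s then
        let i := index q s in
        clsim p (if i == 0%N then p else Num.max p s`_i.-1)
      else clsim p q
  | IInf p => clsim p (Num.max p (last 0 s) + 1)
  end.

(* F_A: Moebius inversion. Indices i, j are paper indices (1-based). *)
Definition FA (I : itv R) : gA K :=
  match I with
  | IFin a b =>
      if [&& a \in s, b \in s & (index a s < index b s)%N] then
        let i := (index a s).+1 in let j := (index b s).+1 in
        dFA (IFin (sp i) (sp j)) - dFA (IFin (sp i) (sp j.+1))
        + dFA (IFin (sp i.-1) (sp j.+1)) - dFA (IFin (sp i.-1) (sp j))
      else 0
  | IInf a =>
      if a \in s then
        let i := (index a s).+1 in dFA (IInf (sp i)) - dFA (IInf (sp i.-1))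
      else 0
  end.

End TypeA.

From Pilot Require Import Defs.
From HB Require Import structures.
From mathcomp Require Import all_boot all_order all_algebra.
From mathcomp Require Import reals.
From mathcomp Require Import lra.
Set Implicit Arguments.
Unset Strict Implicit.
Unset Printing Implicit Defensive.
Import Order.TTheory GRing.Theory Num.Theory.
Local Open Scope ring_scope.

(* The upper sums of both Moebius inversions telescope back to type A values:
   for [p, q) with a = p - eps and b = q + eps in S, the F side equals
   [im F(a <= y)] - [im F(u <= y)] for every y just below b, where u lies below
   all critical values, and similarly for G.  Since S is 4 eps-spaced, F is
   constant on [a, a + 2 eps], on [u, u + 2 eps] and on [Y, Y + 2 eps] for a
   suitable Y just below b - 2 eps.  The interleaving factors F(a <= Y + 2 eps)
   through G(a + eps <= Y + eps) and conversely, with invertible outer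
   composites; with concrete images such mutually factoring maps have
   isomorphic images.  Hence the two upper sums are equal, which is more than
   the required inequality. *)

(* [all_algebra] exports another [Hom] (from vector.v). *)
Local Notation Hom := Defs.Hom.

Section ConcreteImages.
Variables (C : category) (Im : images C) (Cc : concrete Im).

Lemma mono_compr (a b c : Obj C) (f : Hom a b) (g : Hom b c) :
  mono (cmp g f) -> mono f.
Proof. by move=> mgf z g1 g2 E; apply: mgf; rewrite -!comp_assoc E. Qed.

Lemma cmp_cancel (a b d : Obj C) (h : Hom b a) (g : Hom a b) (x : Hom d a) :
  cmp h g = idm a -> cmp h (cmp g x) = x.
Proof. by move=> hg; rewrite comp_assoc hg comp_id_l. Qed.

(* Concreteness makes [im_e f] surjective, hence epi. *)
Lemma im_e_epi (a b : Obj C) (f : Hom a b) z (u v : Hom (im Im f) z) :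
  cmp u (im_e Im f) = cmp v (im_e Im f) -> u = v.
Proof.
move=> E; apply: (@Uh_faithful _ _ Cc) => y.
have [x fx] : exists x, Uh (c0:=Cc) f x = Uh (c0:=Cc) (im_m Im f) y.
  by apply/Uh_im_range; exists y.
have <- : Uh (c0:=Cc) (im_e Im f) x = y.
  by apply: (@Uh_im_inj _ _ Cc _ _ f); rewrite -Uh_comp im_fact.
by rewrite -!Uh_comp E.
Qed.

Lemma iso_im_interleaved (A X A' B' Y B : Obj C) (Q : Hom A X) (S : Hom X A')
    (f' : Hom A' B') (Rr : Hom B' Y) (P : Hom Y B) (g : Hom X Y) (f : Hom A B) :
  is_iso (cmp S Q) -> is_iso (cmp P Rr) ->
  g = cmp Rr (cmp f' S) -> f = cmp P (cmp g Q) -> iso (im Im f) (im Im g).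
Proof.
move=> [al [_ alKv]] [be [beK beKv]] Eg Ef.
have RbePg : cmp Rr (cmp be (cmp P g)) = g.
  by rewrite Eg (comp_assoc _ Rr P) (cmp_cancel _ beK).
have RbePm : cmp Rr (cmp be (cmp P (im_m Im g))) = im_m Im g.
  by apply: im_e_epi; rewrite -!comp_assoc !im_fact.
have mono_Pm : mono (cmp P (im_m Im g)).
  apply: (mono_compr (g := cmp Rr be)).
  by rewrite -!comp_assoc RbePm; exact: im_mono.
have mono_Rbem : mono (cmp Rr (cmp be (im_m Im f))).
  apply: (mono_compr (g := P)).
  by rewrite (comp_assoc _ Rr P) comp_assoc beKv comp_id_l; exact: im_mono.
have gQalS : cmp g (cmp Q (cmp al S)) = g.
  by rewrite Eg -!comp_assoc (comp_assoc _ Q S) (comp_assoc S al) alKv comp_id_l.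
have [k2 Hk2] : exists k2, cmp (cmp P (im_m Im g)) k2 = im_m Im f.
  apply: (@im_univ _ Im _ _ _ _ (cmp (im_e Im g) Q) _ mono_Pm).
  by rewrite Ef -!comp_assoc (comp_assoc _ (im_e Im g)) im_fact.
have [k Hk] : exists k, cmp (cmp Rr (cmp be (im_m Im f))) k = im_m Im g.
  apply: (@im_univ _ Im _ _ _ _ (cmp (im_e Im f) (cmp al S)) _ mono_Rbem).
  by rewrite -!comp_assoc (comp_assoc _ (im_e Im f)) im_fact Ef -!comp_assoc gQalS.
have Hk' : cmp (im_m Im f) k = cmp P (im_m Im g).
  by rewrite -Hk -!comp_assoc (comp_assoc _ Rr P) comp_assoc beKv comp_id_l.
exists k2, k; split.
- by apply: (@im_mono _ Im _ _ f); rewrite comp_id_r comp_assoc Hk' Hk2.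
- by apply: mono_Pm; rewrite comp_id_r comp_assoc Hk2 Hk'.
Qed.

End ConcreteImages.

Lemma is_iso_id (C : category) (a : Obj C) : is_iso (idm a).
Proof. by exists (idm a); rewrite comp_id_l. Qed.

Lemma iso_cls (C : category) (M : smon C) (K : groth M) (a b : Obj C) :
  iso a b -> cls K a = cls K b.
Proof.
case=> f [g [gf fg]]; apply/(cls_eq K); exists (munit M).
exists (tenh M f (idm (munit M))), (tenh M g (idm (munit M))).
by rewrite -!tenh_comp gf fg !comp_id_l !tenh_id.
Qed.

Lemma cls_munit (C : category) (M : smon C) (K : groth M) : cls K (munit M) = 0.
Proof.
have : cls K (ten M (munit M) (munit M)) = cls K (munit M).
  by apply: iso_cls; exists (lunit M _), (lunit_inv M _); rewrite lunit_K lunit_Kv.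
by rewrite cls_ten => /eqP; rewrite -subr_eq0 addrK => /eqP.
Qed.

Section ImageClasses.
Variables (R : realType) (C : category) (M : smon C) (K : groth M).
Variables (Im : images C) (Cc : concrete Im).
Implicit Types (F G H : pmod R C).

Lemma Fm_irrelevance H (p q : R) (h1 h2 : p <= q) : Fm H h1 = Fm H h2.
Proof. by rewrite (bool_irrelevance h1 h2). Qed.

Lemma clsimE H (p q : R) (h : p <= q) : clsim K Im H p q = cls K (im Im (Fm H h)).
Proof.
rewrite /clsim; move: (erefl (p <= q)); rewrite {2 3}h => h'.
by rewrite (Fm_irrelevance H h' h).
Qed.

Lemma clsim_isoL H (a a' y : R) (h1 : a <= a') (h2 : a' <= y) :
  is_iso (Fm H h1) -> clsim K Im H a y = clsim K Im H a' y.
Proof.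
move=> iso1; have h3 := le_trans h1 h2.
rewrite (clsimE H h3) (clsimE H h2); apply: iso_cls.
apply: (@iso_im_interleaved _ _ Cc _ _ _ _ _ _ (Fm H h1) (idm _) (Fm H h2)
  (idm _) (idm _)); rewrite ?comp_id_l ?comp_id_r //; first exact: is_iso_id.
exact: Fm_comp.
Qed.

Lemma clsim_isoR H (a y y' : R) (h1 : a <= y) (h2 : y <= y') :
  is_iso (Fm H h2) -> clsim K Im H a y' = clsim K Im H a y.
Proof.
move=> iso2; have h3 := le_trans h1 h2.
rewrite (clsimE H h3) (clsimE H h1); apply: iso_cls.
apply: (@iso_im_interleaved _ _ Cc _ _ _ _ _ _ (idm _) (idm _) (Fm H h1)
  (idm _) (Fm H h2)); rewrite ?comp_id_l ?comp_id_r //; first exact: is_iso_id.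
exact: Fm_comp.
Qed.

(* F(a <= b + 2 eps) factors as psi o G(a + eps <= b + eps) o phi and
   G(a + eps <= b + eps) as phi o F(a + 2 eps <= b) o psi; the outer
   composites are F(a <= a + 2 eps) and F(b <= b + 2 eps). *)
Lemma clsim_interleaved F G (eps a b : R) (ha : a <= a + eps + eps)
    (hb : b <= b + eps + eps) :
  interleaved F G eps -> a + eps + eps <= b ->
  is_iso (Fm F ha) -> is_iso (Fm F hb) ->
  clsim K Im F a (b + eps + eps) = clsim K Im G (a + eps) (b + eps).
Proof.
move=> [phi [psi [phi_nat _ psi_phi phi_psi]]] hab iso_a iso_b.
have hF : a <= b + eps + eps by lra.
have hG : a + eps <= b + eps by lra.
have hFab : a <= b by lra.
have hG' : a + eps + eps + eps <= b + eps by lra.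
have hG'' : a + eps <= a + eps + eps + eps by lra.
rewrite (clsimE F hF) (clsimE G hG); apply: iso_cls.
apply: (@iso_im_interleaved _ _ Cc _ _ _ _ _ _ (phi a) (psi (a + eps)) (Fm F hab)
  (phi b) (psi (b + eps))).
- by rewrite (psi_phi a ha).
- by rewrite (psi_phi b hb).
- rewrite comp_assoc -(phi_nat _ _ hab hG') -comp_assoc (phi_psi _ hG'').
  exact: Fm_comp.
- rewrite (phi_nat _ _ hFab hG) comp_assoc (psi_phi b hb).
  exact: Fm_comp.
Qed.

End ImageClasses.

Section SortedSeq.
Variable R : realFieldType.
Implicit Types (s : seq R) (d p q x : R).

Lemma sorted_nth_le s i j :
  sorted <%R s -> (i <= j)%N -> (j < size s)%N -> s`_i <= s`_j.
Proof.
move=> ss ij jlt; rewrite (lt_sorted_leq_nth 0 ss) //; exact: leq_ltn_trans ij jlt.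
Qed.

Lemma sorted_le_count s p i :
  sorted <%R s -> (i < size s)%N -> (s`_i <= p) = (i < count (<= p) s)%N.
Proof.
move=> ss ilt; apply/idP/idP => [sip|]; last first.
  by apply: nth_count_le; case/andP: (lt_sorted_is_uniq_le ss).
by rewrite -(count_le_nth 0 ss ilt); apply: sub_count => t /= /le_trans; apply.
Qed.

Lemma sorted_lt_count s q i :
  sorted <%R s -> (i < size s)%N -> (s`_i < q) = (i < count (< q) s)%N.
Proof.
move=> ss ilt; apply/idP/idP => [siq|]; last first.
  by apply: nth_count_lt; case/andP: (lt_sorted_is_uniq_le ss).
by rewrite -(count_le_nth 0 ss ilt); apply: sub_count => t /= /le_lt_trans; apply.
Qed.

Lemma sorted_head_le s x : sorted <%R s -> x \in s -> head 0 s <= x.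
Proof. by move=> ss /(nthP 0) [i ilt <-]; rewrite -nth0 sorted_nth_le. Qed.

Lemma sorted_le_last s x : sorted <%R s -> x \in s -> x <= last 0 s.
Proof.
move=> ss /(nthP 0) [i ilt <-]; have s0 := leq_ltn_trans (leq0n i) ilt.
rewrite -nth_last; apply: sorted_nth_le => //; last by rewrite ltn_predL.
by rewrite -ltnS prednK.
Qed.

Lemma count_le_eq0 s p : count (<= p) s = 0%N -> {in s, forall t, p < t}.
Proof.
move=> /eqP; rewrite -leqn0 leqNgt -has_count => /hasPn sp t /sp.
by rewrite -ltNge.
Qed.

Definition spaced d s := {in s &, forall a b, a < b -> a + d < b}.

Lemma sorted_gaps_spaced s eps : sorted <%R s ->
  (forall i : nat, (0 < i < size s)%N -> eps < (s`_i - s`_i.-1) / 4) ->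
  spaced (4 * eps) s.
Proof.
move=> ss gap _ _ /(nthP 0) [i ilt <-] /(nthP 0) [j jlt <-] sij.
have ij : (i < j)%N by rewrite -(lt_sorted_ltn_nth 0 ss).
have j0 : (0 < j)%N := leq_ltn_trans (leq0n i) ij.
have := gap j; rewrite j0 jlt => /(_ isT).
have : s`_i <= s`_j.-1.
  apply: sorted_nth_le => //; first by rewrite -ltnS prednK.
  exact: leq_ltn_trans (leq_pred j) jlt.
lra.
Qed.

Lemma ub_below_gap s d b : {in s, forall t, t < b -> t + d < b} ->
  exists c, c + d < b /\ {in s, forall t, t < b -> t <= c}.
Proof.
elim: s => [_|x s IHs gap]; first by exists (b - d - 1); split=> [|t]; [lra|].
have [c [cdb cmax]] : exists c, c + d < b /\ {in s, forall t, t < b -> t <= c}.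
  by apply: IHs => t ts; apply: gap; rewrite inE ts orbT.
case: (ltP x b) => [xb|bx].
  have xdb := gap x (mem_head x s) xb.
  exists (Num.max c x); split.
    suff : Num.max c x < b - d by lra.
    by rewrite gt_max; apply/andP; split; lra.
  move=> t; rewrite inE => /orP [/eqP -> _|ts tb]; first by rewrite le_max lexx orbT.
  by rewrite le_max cmax.
exists c; split=> // t; rewrite inE => /orP [/eqP -> xb|]; [lra|exact: cmax].
Qed.

Lemma exists_strict_lb s d : exists u, {in s, forall t, u + d < t}.
Proof.
elim: s => [|x s [u us]]; first by exists 0.
exists (Num.min u (x - d - 1)) => t; rewrite inE => /orP [/eqP ->|/us].
  have : Num.min u (x - d - 1) <= x - d - 1 by rewrite ge_min lexx orbT.
  by lra.
move=> ut; have : Num.min u (x - d - 1) <= u by rewrite ge_min lexx.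
by lra.
Qed.

End SortedSeq.

Section BigNth.
Variables (I : Type) (V : zmodType) (x0 : I) (r : seq I) (P : pred I) (f : I -> V).

Lemma big_nth_prefix c : (c <= size r)%N ->
  (forall i, (i < size r)%N -> P (nth x0 r i) = (i < c)%N) ->
  \sum_(x <- r | P x) f x = \sum_(0 <= i < c) f (nth x0 r i).
Proof.
move=> cr Pr; rewrite (big_nth x0) (big_cat_nat (leq0n c) cr) /=.
rewrite [X in _ + X]big1_seq ?addr0 => [|i /andP [+ /[!mem_index_iota] /andP [ci ir]]].
  by apply: congr_big_nat => // i /andP [_ ic]; rewrite Pr ?ic // (leq_trans ic cr).
by rewrite Pr // ltnNge ci.
Qed.

Lemma big_nth_suffix c : (c <= size r)%N ->
  (forall i, (i < size r)%N -> P (nth x0 r i) = (c <= i)%N) ->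
  \sum_(x <- r | P x) f x = \sum_(c <= i < size r) f (nth x0 r i).
Proof.
move=> cr Pr; rewrite (big_nth x0) (big_cat_nat (leq0n c) cr) /=.
rewrite big1_seq ?add0r => [|i /andP [+ /[!mem_index_iota] /andP [_ ic]]].
  by apply: congr_big_nat => // i /andP [ci ir]; rewrite Pr ?ci.
by rewrite Pr => [/(leq_trans ic)|]; [rewrite ltnn | exact: leq_trans ic cr].
Qed.

End BigNth.

Section ItvEq.
Variable T : eqType.

Definition itv_eqb (I J : itv T) : bool :=
  match I, J with
  | IFin a b, IFin c d => (a == c) && (b == d)
  | IInf a, IInf c => a == c
  | _, _ => false
  end.

Lemma itv_eqP : Equality.axiom itv_eqb.
Proof.
case=> [a b|a] [c d|c] /=; try by constructor.
- by apply: (iffP andP) => [[/eqP -> /eqP ->]|[-> ->]] //; rewrite !eqxx.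
- by apply: (iffP eqP) => [->|[->]].
Qed.

HB.instance Definition _ := hasDecEq.Build (itv T) itv_eqP.

End ItvEq.

Lemma upsumE (R : realType) (V : zmodType) (Y : itv R -> V) (ts : seq R) I :
  uniq ts -> upsum Y ts I =
  \sum_(a <- ts) \sum_(b <- ts | contains (IFin a b) I) Y (IFin a b)
  + \sum_(a <- ts | contains (IInf a) I) Y (IInf a).
Proof.
move=> uts; rewrite /upsum /cands undup_id // big_mkcond big_cat.
rewrite big_allpairs_dep big_map; congr (_ + _); last by rewrite [RHS]big_mkcond.
by apply: eq_bigr => a _; rewrite [RHS]big_mkcond.
Qed.

Section MoebiusInversion.
Variables (R : realType) (C : category) (M : smon C) (K : groth M) (Im : images C).
Variables (H : pmod R C) (T : seq R).
Hypothesis sorted_T : sorted <%R T.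

Local Notation dF := (dFA K Im H T).
Local Notation F_A := (FA K Im H T).
Local Notation D k l := (dF (IFin (sp T k) (sp T l))).
Local Notation E k := (dF (IInf (sp T k))).

Let uniq_T : uniq T := lt_sorted_uniq sorted_T.

Lemma sp_le_last k : (k <= size T)%N -> sp T k <= last 0 T.
Proof.
rewrite /sp; case: eqP => [_ _|/eqP k0 kT].
  case: T sorted_T => [|t T'] sT /=; first lra.
  by have := sorted_le_last sT (mem_head t T'); lra.
by rewrite kT sorted_le_last // mem_nth // prednK // lt0n.
Qed.

Lemma dFA_fin_last k : (k <= size T)%N -> D k (size T).+1 = E k.
Proof.
move=> kT; have -> : sp T (size T).+1 = last 0 T + 1 by rewrite /sp /= ltnn.
rewrite /dFA; case: ifP => [/(sorted_le_last sorted_T) ?|_]; first by exfalso; lra.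
by rewrite max_r // sp_le_last.
Qed.

Lemma FA_inf_nth i : (i < size T)%N -> F_A (IInf T`_i) = E i.+1 - E i.
Proof. by move=> iT; rewrite /FA mem_nth // index_uniq. Qed.

Lemma FA_fin_nth i j : (i < j)%N -> (j < size T)%N ->
  F_A (IFin T`_i T`_j) = (D i.+1 j.+1 - D i j.+1) - (D i.+1 j.+2 - D i j.+2).
Proof.
move=> ij jT; have iT := ltn_trans ij jT.
rewrite /FA !mem_nth // !index_uniq // ij /=.
by rewrite opprB -!addrA; congr (_ + _); rewrite addrCA addrA addrC.
Qed.

Lemma sum_FA_inf p :
  \sum_(t <- T | t <= p) F_A (IInf t) = E (count (<= p) T) - E 0.
Proof.
rewrite (big_nth_prefix (x0 := 0) _ (count_size (<= p) T)) => [|i iT].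
  apply: (telescope_sumr_eq (fun k => E k)) => // i /andP [_ ia].
  exact/FA_inf_nth/(leq_trans ia (count_size _ _)).
exact: sorted_le_count.
Qed.

Lemma upsum_FA_inf p : upsum F_A T (IInf p) = E (count (<= p) T) - E 0.
Proof. by rewrite upsumE // big1 ?add0r ?sum_FA_inf // => t _; rewrite big_pred0. Qed.

Section Row.
Variables (p q : R) (i : nat).
Hypotheses (pq : p < q) (iT : (i < size T)%N) (Tip : T`_i <= p).
Let b := count (< q) T.

Lemma sum_FA_fin_row :
  \sum_(t <- T | contains (IFin T`_i t) (IFin p q)) F_A (IFin T`_i t) =
  (D i.+1 b.+1 - D i b.+1) - (D i.+1 (size T).+1 - D i (size T).+1).
Proof.
rewrite (big_nth_suffix (x0 := 0) _ (count_size (< q) T)) => [|j jT]; last first.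
  by rewrite /= Tip leNgt (sorted_lt_count _ sorted_T) // -leqNgt.
rewrite (telescope_sumr_eq (fun k => - (D i.+1 k.+1 - D i k.+1))) ?count_size //.
  by rewrite addrC opprK.
move=> j /andP [bj jT]; rewrite opprK addrC FA_fin_nth //.
have qTj : q <= T`_j by rewrite leNgt (sorted_lt_count _ sorted_T) // -leqNgt.
have := le_lt_trans Tip (lt_le_trans pq qTj).
by rewrite (lt_sorted_ltn_nth 0 sorted_T) ?inE.
Qed.

End Row.

Lemma upsum_FA_fin p q : p < q ->
  upsum F_A T (IFin p q) = D (count (<= p) T) (count (< q) T).+1 - D 0 (count (< q) T).+1.
Proof.
move=> pq; set a := count (<= p) T; set b := count (< q) T.
have aT : (a <= size T)%N := count_size _ _.
rewrite upsumE // sum_FA_inf.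
have -> : \sum_(t <- T) \sum_(u <- T | contains (IFin t u) (IFin p q)) F_A (IFin t u)
    = \sum_(t <- T | t <= p) \sum_(u <- T | contains (IFin t u) (IFin p q)) F_A (IFin t u).
  rewrite [RHS]big_mkcond; apply: eq_bigr => t _; case: ifP => // tp.
  by rewrite big_pred0 // => u; rewrite /= tp.
rewrite (big_nth_prefix (x0 := 0) _ aT) => [|i iT]; last exact: sorted_le_count.
rewrite (telescope_sumr_eq (fun k => D k b.+1 - D k (size T).+1)) // => [|i /andP [_ ia]].
  by rewrite !dFA_fin_last // opprB addrAC !subrKA.
have iT := leq_trans ia aT.
by rewrite sum_FA_fin_row // ?(sorted_le_count _ sorted_T) // opprD addrACA -opprD.
Qed.

End MoebiusInversion.

Lemma sp_count_le (R : realType) (T : seq R) p : sorted <%R T ->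
  (0 < count (<= p) T)%N ->
  sp T (count (<= p) T) <= p /\ {in T, forall t, sp T (count (<= p) T) < t -> p < t}.
Proof.
move=> sT a0; set a := count (<= p) T; have aT : (a <= size T)%N := count_size _ _.
have a1T : (a.-1 < size T)%N by rewrite (leq_trans _ aT) // ltn_predL.
have -> : sp T a = T`_a.-1 by rewrite /sp eqn0Ngt a0 aT.
split; first by rewrite (sorted_le_count _ sT) // ltn_predL.
move=> _ /(nthP 0) [m mT <-]; apply: contraTT.
rewrite -!leNgt (sorted_le_count _ sT) // => ma.
by apply: sorted_nth_le => //; rewrite -ltnS prednK.
Qed.

Section Constructible.
Variables (R : realType) (C : category) (M : smon C) (K : groth M) (Im : images C).
Variables (Cc : concrete Im) (H : pmod R C) (T : seq R).
Hypothesis H_T : constructible M H T.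

Local Notation cim := (clsim K Im H).
Local Notation dF := (dFA K Im H T).

Lemma constructible_sorted : sorted <%R T.
Proof. by case: H_T. Qed.

Lemma below_sp0 : {in T, forall t, sp T 0 < t}.
Proof. by move=> t /(sorted_head_le constructible_sorted); rewrite /sp /=; lra. Qed.

Lemma constructible_iso x y (h : x <= y) :
  {in T, forall t, x < t -> y < t} -> is_iso (Fm H h).
Proof.
case: H_T => T0 sT before inner after cell.
case: (ltP y (head 0 T)) => [yh|hy]; first by case: (before _ _ h yh); exact: is_iso_id.
case: (leP (last 0 T) x) => [lx|xl]; first exact: after.
have T0' : (0 < size T)%N by case: T T0 {sT before inner after cell hy xl}.
set k := count (<= x) T.
have kx i : (i < size T)%N -> (T`_i <= x) = (i < k)%N by apply: sorted_le_count.
have hT : head 0 T \in T by rewrite -nth0 mem_nth.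
have k0 : (0 < k)%N.
  by rewrite -kx // nth0 leNgt; apply/negP => xh; have := cell _ hT xh; lra.
have kT : (k < size T)%N.
  rewrite ltnNge; apply/negP => Tk.
  suff : last 0 T <= x by lra.
  by rewrite -nth_last kx ?ltn_predL // prednK.
have k1T : (k.-1 < size T)%N := leq_ltn_trans (leq_pred k) kT.
apply: (inner k.-1); rewrite ?prednK // ?kx ?ltn_predL //.
by apply: cell; rewrite ?mem_nth // ltNge kx // ltnn.
Qed.

Lemma clsim_cellL x x' y : x <= x' -> x' <= y ->
  {in T, forall t, x < t -> x' < t} -> cim x y = cim x' y.
Proof.
by move=> h1 h2 cell; apply: (clsim_isoL K Cc (h1 := h1) h2); apply: constructible_iso.
Qed.

Lemma clsim_cellR x y y' : x <= y -> y <= y' ->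
  {in T, forall t, y < t -> y' < t} -> cim x y' = cim x y.
Proof.
by move=> h1 h2 cell; apply: (clsim_isoR K Cc h1); apply: constructible_iso.
Qed.

Lemma clsim_below u v y : u <= y -> v <= y ->
  {in T, forall t, u < t} -> {in T, forall t, v < t} -> cim u y = cim v y.
Proof.
move=> uy vy uT vT; case: (leP u v) => [uv|vu].
  by apply: clsim_cellL => // t tT _; exact: vT.
by apply/esym/clsim_cellL => // [|t tT _]; [exact: ltW | exact: uT].
Qed.

Lemma clsim_sp_count p y : p <= y -> sp T (count (<= p) T) <= y ->
  cim (sp T (count (<= p) T)) y = cim p y.
Proof.
have sT := constructible_sorted.
move=> py ay; case: (posnP (count (<= p) T)) => [a0|a0].
  by rewrite a0 in ay *; apply: clsim_below => //; [exact: below_sp0 | exact: count_le_eq0].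
by have [ap acell] := sp_count_le sT a0; apply: clsim_cellL.
Qed.

Lemma clsim_cellR_last x y y' : x <= y -> y <= y' -> last 0 T <= y ->
  cim x y' = cim x y.
Proof.
move=> xy yy' ly; apply: clsim_cellR => // t /(sorted_le_last constructible_sorted).
by lra.
Qed.

Lemma dFA_inf_eventually x y : x <= y -> last 0 T <= y -> dF (IInf x) = cim x y.
Proof.
move=> xy ly; set w := Num.max x (last 0 T).
have xw : x <= w by rewrite le_max lexx.
have lw : last 0 T <= w by rewrite le_max lexx orbT.
rewrite /dFA -/w (clsim_cellR_last (y' := w + 1) xw) ?lerDl //.
by apply/esym/clsim_cellR_last => //; rewrite ge_max xy ly.
Qed.

Lemma dFA_fin_eventually x q : x < q -> x <= last 0 T ->
  exists2 w, w < q & forall y, w <= y -> y < q ->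
    dF (IFin x (sp T (count (< q) T).+1)) = cim x y.
Proof.
have sT := constructible_sorted; have uT := lt_sorted_uniq sT.
move=> xq xl; set b := count (< q) T.
have bq i : (i < size T)%N -> (T`_i < q) = (i < b)%N by apply: sorted_lt_count.
case: (ltnP b (size T)) => [bT|Tb].
  set z := if b == 0%N then x else Num.max x T`_b.-1.
  have b1T : (b.-1 < size T)%N := leq_ltn_trans (leq_pred b) bT.
  have xz : x <= z by rewrite /z; case: eqP => // _; rewrite le_max lexx.
  have zq : z < q.
    by rewrite /z; case: eqP => [//|/eqP b0]; rewrite gt_max xq bq // ltn_predL lt0n.
  exists z => // y zy yq.
  rewrite {1}/sp /= bT /dFA mem_nth // index_uniq //= -/z.
  apply/esym/clsim_cellR => // t /(nthP 0) [m mT <-] zt.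
  case: (ltnP m b) => mb.
    have : T`_m <= z.
      rewrite /z; case: eqP => [b0|_]; first by rewrite b0 in mb.
      by rewrite le_max sorted_nth_le ?orbT // -ltnS prednK // (leq_ltn_trans _ mb).
    by lra.
  suff : q <= T`_m by lra.
  by rewrite leNgt bq // -leqNgt.
have T0 : (0 < size T)%N by case: H_T; case: (T).
have lq : last 0 T < q by rewrite -nth_last bq ?ltn_predL // prednK.
set w := Num.max x (last 0 T).
have xw : x <= w by rewrite le_max lexx.
have lw : last 0 T <= w by rewrite le_max lexx orbT.
exists w => [|y wy yq]; first by rewrite gt_max xq.
rewrite {1}/sp /= ltnNge Tb /dFA.
case: ifP => [/(sorted_le_last sT) ?|_]; first by exfalso; lra.
rewrite (clsim_cellR_last xw _ lw); last by rewrite ge_max lerDl ler01 andbT; lra.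
exact/esym/(clsim_cellR_last xw wy lw).
Qed.

Lemma upsum_FA_fin_eventually p q u : p < q -> u <= p -> {in T, forall t, u < t} ->
  exists2 L, L < q & forall y, L <= y -> y < q ->
    upsum (FA K Im H T) T (IFin p q) = cim p y - cim u y.
Proof.
have sT := constructible_sorted.
move=> pq up uT; rewrite upsum_FA_fin //; set a := count (<= p) T.
case: (posnP a) => [a0|a0].
  exists p => // y py yq; rewrite a0 !subrr (@clsim_below p u) ?subrr //; first lra.
  exact: count_le_eq0.
have [ap _] := sp_count_le sT a0.
have [t tT tp] : exists2 t, t \in T & t <= p by apply/hasP; rewrite has_count.
have s0t := below_sp0 tT.
have s0q : sp T 0 < q by lra.
have aT := count_size (<= p) T.
have [w1 w1q Hw1] := dFA_fin_eventually (le_lt_trans ap pq) (sp_le_last sT aT).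
have [w2 w2q Hw2] := dFA_fin_eventually s0q (sp_le_last sT (leq0n _)).
exists (Num.max (Num.max w1 w2) p) => [|y]; first by rewrite !gt_max w1q w2q pq.
rewrite !ge_max => /andP [/andP [w1y w2y] py] yq.
have [ay s0y uy] : [/\ sp T a <= y, sp T 0 <= y & u <= y] by split; lra.
rewrite (Hw1 y w1y yq) (Hw2 y w2y yq) clsim_sp_count //.
by rewrite (clsim_below s0y uy below_sp0 uT).
Qed.

Lemma upsum_FA_inf_eventually p u : u <= p -> {in T, forall t, u < t} ->
  exists L, forall y, L <= y ->
    upsum (FA K Im H T) T (IInf p) = cim p y - cim u y.
Proof.
have sT := constructible_sorted.
move=> up uT; rewrite upsum_FA_inf //; set a := count (<= p) T.
exists (Num.max p (last 0 T)) => y; rewrite ge_max => /andP [py ly].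
have al := sp_le_last sT (count_size (<= p) T).
have s0l := sp_le_last sT (leq0n (size T)).
have [ay s0y uy] : [/\ sp T a <= y, sp T 0 <= y & u <= y] by split; lra.
rewrite !(dFA_inf_eventually (y := y)) // clsim_sp_count //.
by rewrite (clsim_below s0y uy below_sp0 uT).
Qed.

End Constructible.

Lemma eq_big_uniq_support (I : eqType) (V : zmodType) (r1 r2 : seq I) (P : pred I)
    (F : I -> V) :
  uniq r1 -> uniq r2 -> (forall i, F i != 0 -> (i \in r1) && (i \in r2)) ->
  \sum_(i <- r1 | P i) F i = \sum_(i <- r2 | P i) F i.
Proof.
move=> u1 u2 supp.
have nz r : \sum_(i <- r | P i) F i = \sum_(i <- [seq i <- r | P i && (F i != 0)]) F i.
  rewrite big_filter big_mkcond [RHS]big_mkcond; apply: eq_bigr => i _.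
  by case: (P i) => //=; case: eqP.
rewrite !nz; apply/perm_big/uniq_perm; rewrite ?filter_uniq // => i.
rewrite !mem_filter; case: (boolP (P i && (F i != 0))) => //= /andP [_ /supp].
by case/andP => -> ->.
Qed.

Section Candidates.
Variable R : realType.
Implicit Types (ts : seq R) (a b : R).

Lemma mem_cands_fin ts a b : (IFin a b \in cands ts) = (a \in ts) && (b \in ts).
Proof.
rewrite /cands mem_cat -(mem_undup ts) -[b \in ts](mem_undup ts).
have -> : (IFin a b \in [seq IInf c | c <- undup ts]) = false by apply/mapP => -[].
rewrite orbF; apply/allpairsP/andP => [[[x y] /= [xt yt [-> ->]]] // | [at' bt]].
by exists (a, b).
Qed.

Lemma mem_cands_inf ts a : (IInf a \in cands ts) = (a \in ts).
Proof.
rewrite /cands mem_cat -(mem_undup ts) mem_map => [|x y [] //].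
suff -> : (IInf a \in [seq IFin c d | c <- undup ts, d <- undup ts]) = false by [].
by apply/allpairsP => -[[x y] [_ _ //]].
Qed.

Lemma cands_uniq ts : uniq (cands ts).
Proof.
rewrite /cands cat_uniq; apply/and3P; split.
- by apply: allpairs_uniq; rewrite ?undup_uniq // => -[x y] [x' y'] _ _ /= [-> ->].
- by apply/hasPn => J /mapP [x _ ->]; apply/negP => /allpairsP [[? ?] [_ _ //]].
- by rewrite map_inj_uniq ?undup_uniq // => x y [].
Qed.

Lemma supported_mem_cands (V : zmodType) (Y : itv R -> V) ts J :
  supported Y ts -> Y J != 0 -> J \in cands ts.
Proof.
move=> supp /supp; case: J => [a b|a] /andP [_];
  by rewrite ?mem_cands_fin ?mem_cands_inf.
Qed.

Lemma upsum_supported (V : zmodType) (Y : itv R -> V) ts ts' I :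
  supported Y ts -> supported Y ts' -> upsum Y ts I = upsum Y ts' I.
Proof.
move=> supp supp'; apply: eq_big_uniq_support; rewrite ?cands_uniq // => J YJ.
by rewrite !(supported_mem_cands _ YJ).
Qed.

End Candidates.

Section Shrink.
Variable R : realType.

Definition shrink (eps : R) (I : itv R) : itv R :=
  match I with IFin a b => IFin (a + eps) (b - eps) | IInf a => IInf (a + eps) end.

Lemma grow_shrink eps : cancel (shrink eps) (grow eps).
Proof. by case=> [a b|a] /=; rewrite ?addrK ?subrK. Qed.

Lemma shrink_grow eps : cancel (grow eps) (shrink eps).
Proof. by case=> [a b|a] /=; rewrite ?addrK ?subrK. Qed.

Lemma contains_shrink eps J I : contains (shrink eps J) I = contains J (grow eps I).
Proof. by case: J => [a b|a]; case: I => [p q|p] //=; rewrite ?lerBrDr ?lerBlDr. Qed.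

End Shrink.

Section TypeASupport.
Variables (R : realType) (C : category) (M : smon C) (K : groth M) (Im : images C).
Variables (H : pmod R C) (s : seq R).
Hypothesis sorted_s : sorted <%R s.

Local Notation F_A := (FA K Im H s).

Lemma FA_fin_neq0 a b : F_A (IFin a b) != 0 -> [/\ a \in s, b \in s & a < b].
Proof.
rewrite /FA; case: ifP => [/and3P [ha hb hab] _|]; last by rewrite eqxx.
split=> //; rewrite -(nth_index 0 ha) -(nth_index 0 hb).
by rewrite (lt_sorted_ltn_nth 0 sorted_s) // inE index_mem.
Qed.

Lemma FA_inf_neq0 a : F_A (IInf a) != 0 -> a \in s.
Proof. by rewrite /FA; case: ifP => //; rewrite eqxx. Qed.

Lemma FA_supported : supported F_A s.
Proof.
case=> [a b|a] /=; last by move/FA_inf_neq0 ->.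
by case/FA_fin_neq0 => -> -> ->.
Qed.

Lemma nabla_FA_supported eps :
  supported (nabla eps F_A) ([seq t + eps | t <- s] ++ [seq t - eps | t <- s]).
Proof.
rewrite /nabla => -[p q|p].
  case: ifP => [_|_]; last by rewrite eqxx.
  case/FA_fin_neq0 => ps qs _; rewrite /= !mem_cat; apply/andP.
  by split; apply/orP; [left|right]; apply/mapP;
    [exists (p - eps); rewrite ?subrK | exists (q + eps); rewrite ?addrK].
move/FA_inf_neq0 => ps; rewrite /= mem_cat; apply/orP; left.
by apply/mapP; exists (p - eps); rewrite ?subrK.
Qed.

Lemma upsum_nabla_FA eps ts I : 0 <= eps -> spaced (4 * eps) s ->
  supported (nabla eps F_A) ts -> upsum (nabla eps F_A) ts I = upsum F_A s (grow eps I).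
Proof.
move=> e0 sp4 supp; rewrite /upsum.
rewrite (@eq_big_uniq_support _ _ _ [seq shrink eps J | J <- cands s]); first last.
- move=> J nz; rewrite (supported_mem_cands supp nz) /=.
  move: nz; rewrite /nabla; case: ifP => [_ nz|_]; last by rewrite eqxx.
  by rewrite -(shrink_grow eps J) map_f // (supported_mem_cands FA_supported nz).
- by rewrite map_inj_uniq ?cands_uniq //; exact: (can_inj (grow_shrink eps)).
- exact: cands_uniq.
rewrite big_map; apply: eq_big => [J|J _]; first by rewrite contains_shrink.
rewrite /nabla grow_shrink; case: ifP => // nv.
case: J nv => [a b|a] //= nv.
case: (eqVneq (F_A (IFin a b)) 0) => // /FA_fin_neq0 [ha hb ab].
have ab4 := sp4 a b ha hb ab; move/negbT: nv; rewrite -leNgt => nv.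
by exfalso; lra.
Qed.

End TypeASupport.

Section Interleaving.
Variables (R : realType) (C : category) (M : smon C) (K : groth M) (Im : images C).
Variables (Cc : concrete Im) (F G : pmod R C) (s T : seq R) (eps : R).
Hypotheses (H_F : constructible M F s) (H_G : constructible M G T).
Hypotheses (FG : interleaved F G eps) (eps_ge0 : 0 <= eps) (spaced_s : spaced (4 * eps) s).

Local Notation cimF := (clsim K Im F).
Local Notation cimG := (clsim K Im G).

(* [lra] does not see section hypotheses, so the proofs restate those it needs. *)

Lemma clsim_interleaved_cell a b : a + eps + eps <= b ->
  {in s, forall t, a < t -> a + eps + eps < t} ->
  {in s, forall t, b < t -> b + eps + eps < t} ->
  cimF a (b + eps + eps) = cimG (a + eps) (b + eps).
Proof.
move=> ab cell_a cell_b; have e0 := eps_ge0.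
have ha : a <= a + eps + eps by lra.
have hb : b <= b + eps + eps by lra.
exact: (clsim_interleaved K Cc FG ab (constructible_iso H_F ha cell_a)
  (constructible_iso H_F hb cell_b)).
Qed.

Section LowerAnchor.
Variable u : R.
Hypotheses (u_s : {in s, forall t, u + eps + eps < t}).
Hypotheses (u_T : {in T, forall t, u + eps < t}).

Lemma clsim_sub_interleaved p Y : p - eps \in s -> p + eps <= Y ->
  {in s, forall t, Y < t -> Y + eps + eps < t} ->
  cimF (p - eps) (Y + eps + eps) - cimF u (Y + eps + eps)
  = cimG p (Y + eps) - cimG (u + eps) (Y + eps).
Proof.
have [e0 sp4] := (eps_ge0, spaced_s).
move=> a_s pY cell_Y; have ua := u_s a_s.
have [aY uY] : p - eps + eps + eps <= Y /\ u + eps + eps <= Y by split; lra.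
have cell_a : {in s, forall t, p - eps < t -> p - eps + eps + eps < t}.
  by move=> t ts /(sp4 _ _ a_s ts); lra.
have cell_u : {in s, forall t, u < t -> u + eps + eps < t} by move=> t /u_s.
rewrite (clsim_interleaved_cell aY cell_a cell_Y).
by rewrite (clsim_interleaved_cell uY cell_u cell_Y) subrK.
Qed.

Let u_below_s : {in s, forall t, u < t}.
Proof. by have e0 := eps_ge0; move=> t /u_s; lra. Qed.

Lemma upsum_FA_interleaved_fin p q : p < q ->
  FA K Im F s (IFin (p - eps) (q + eps)) != 0 ->
  upsum (FA K Im F s) s (IFin (p - eps) (q + eps)) = upsum (FA K Im G T) T (IFin p q).
Proof.
have [e0 sp4] := (eps_ge0, spaced_s).
move=> pq /(FA_fin_neq0 (constructible_sorted H_F)) [a_s b_s ab].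
have a4b := sp4 _ _ a_s b_s ab; have ua := u_s a_s.
have [ua' uG] : u <= p - eps /\ u + eps <= p by split; lra.
have [LF LFb HF] := upsum_FA_fin_eventually K Cc H_F ab ua' u_below_s.
have [LG LGq HG] := upsum_FA_fin_eventually K Cc H_G pq uG u_T.
have [c [cb cmax]] := ub_below_gap (fun t ts tb => sp4 t _ ts b_s tb).
have ac : p - eps <= c := cmax _ a_s ab.
pose Y := Num.max (Num.max (LF - eps - eps) (LG - eps)) (Num.max (p + eps) c).
have [Y1 Y2 Y3 Y4] : [/\ LF - eps - eps <= Y, LG - eps <= Y, p + eps <= Y & c <= Y].
  by rewrite !le_max !lexx !orbT.
have Yq : Y < q - eps by rewrite !gt_max; apply/andP; split; apply/andP; split; lra.
have [yF1 yF2 yG1 yG2] : [/\ LF <= Y + eps + eps, Y + eps + eps < q + eps,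
  LG <= Y + eps & Y + eps < q] by split; lra.
rewrite (HF _ yF1 yF2) (HG _ yG1 yG2) clsim_sub_interleaved // => t ts Yt.
by case: (ltP t (q + eps)) => [/(cmax _ ts)|]; lra.
Qed.

Lemma upsum_FA_interleaved_inf p : FA K Im F s (IInf (p - eps)) != 0 ->
  upsum (FA K Im F s) s (IInf (p - eps)) = upsum (FA K Im G T) T (IInf p).
Proof.
have e0 := eps_ge0.
move=> /FA_inf_neq0 a_s; have ua := u_s a_s.
have [ua' uG] : u <= p - eps /\ u + eps <= p by split; lra.
have [LF HF] := upsum_FA_inf_eventually K Cc H_F ua' u_below_s.
have [LG HG] := upsum_FA_inf_eventually K Cc H_G uG u_T.
pose Y := Num.max (Num.max LF LG) (Num.max (p + eps) (last 0 s)).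
have [Y1 Y2 Y3 Y4] : [/\ LF <= Y, LG <= Y, p + eps <= Y & last 0 s <= Y].
  by rewrite !le_max !lexx !orbT.
have [yF yG] : LF <= Y + eps + eps /\ LG <= Y + eps by split; lra.
rewrite (HF _ yF) (HG _ yG) clsim_sub_interleaved //.
by move=> t /(sorted_le_last (constructible_sorted H_F)); lra.
Qed.

End LowerAnchor.

Lemma upsum_FA_interleaved I : valid I -> FA K Im F s (grow eps I) != 0 ->
  upsum (FA K Im F s) s (grow eps I) = upsum (FA K Im G T) T I.
Proof.
have e0 := eps_ge0.
have [u uST] := exists_strict_lb (s ++ T) (eps + eps).
have u_s : {in s, forall t, u + eps + eps < t}.
  by move=> t ts; rewrite -addrA uST // mem_cat ts.
have u_T : {in T, forall t, u + eps < t}.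
  by move=> t tT; have := uST t; rewrite mem_cat tT orbT => /(_ isT); lra.
case: I => [p q|p] vI nz.
  exact: (upsum_FA_interleaved_fin u_s u_T vI nz).
exact: (upsum_FA_interleaved_inf u_s u_T nz).
Qed.

End Interleaving.

Theorem theorem8p1 (R : realType) (C : category) (M : smon C) (Im : images C)
    (Cc : concrete Im) (K : groth M) (F : pmod R C) (s : seq R) :
  constructible M F s ->
  forall (G : pmod R C) (T : seq R) (eps : R),
    constructible M G T ->
    dI_eq F G eps ->
    (forall i : nat, (0 < i < size s)%N -> eps < (s`_i - s`_i.-1) / 4) ->
    pdgm_hom (nabla eps (FA K Im F s)) (FA K Im G T).
Proof.
move=> H_F G T eps H_G [eps_ge0 FG _] gaps.
have [sorted_s sorted_T] := (constructible_sorted H_F, constructible_sorted H_G).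
have spaced_s := sorted_gaps_spaced sorted_s gaps.
split; [by eexists; exact: nabla_FA_supported | by exists T; exact: FA_supported |].
move=> ts supp_F supp_G I vI; rewrite {1}/nabla vI => nz.
suff -> : upsum (nabla eps (FA K Im F s)) ts I = upsum (FA K Im G T) ts I.
  by exists (munit M); rewrite subrr cls_munit.
rewrite upsum_nabla_FA //.
rewrite (upsum_supported I supp_G (@FA_supported _ _ _ K Im G T sorted_T)).
exact: upsum_FA_interleaved.
Qed.
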